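(* Consider an instance of VCPNEW on $G=(V,E)$ with data $c,q^1,q^2$, and let MWVCP-EQV be the minimum weight vertex cover instance on $G$ with vertex weights $c'_i=c_i+\sum_{j:(i,j)\in E}(q^2_{ij}-q^1_{ij})$. For a vertex cover $P$ write $\phi(P)=\sum_{i\in P}c'_i$, let $P^o$ be an optimal vertex cover for MWVCP-EQV with $\phi(P^o)>0$, and set $\delta=\frac{\sum_{(i,j)\in E}(2q^1_{ij}-q^2_{ij})}{\phi(P^o)}$. Suppose $\sum_{(i,j)\in E}(2q^1_{ij}-q^2_{ij})\ge0$ and $c'_i\ge0$ for all $i\in V$. If $P^*$ is an $\epsilon$-approximate vertex cover for MWVCP-EQV, then $P^*$ is a $\frac{\epsilon+\delta}{1+\delta}$-approximate vertex cover for VCPNEW.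
   Context: A vertex cover of $G$ is a set $P\subseteq V$ containing at least one endpoint of every edge. For $P\subseteq V$, $E_1(P)$ is the set of edges with exactly one endpoint in $P$ and $E_2(P)$ the set of edges with both endpoints in $P$. VCPNEW is to find a vertex cover $P$ minimizing $f(P)=\sum_{i\in P}c_i+\sum_{(i,j)\in E_1(P)}q^1_{ij}+\sum_{(i,j)\in E_2(P)}q^2_{ij}$. A feasible solution $P^*$ of a minimization problem with optimal value $OPT$ is $\epsilon$-approximate if its objective value is at most $\epsilon\cdot OPT$. *)

From mathcomp Require Import all_boot all_order all_algebra.
Set Implicit Arguments. Unset Strict Implicit. Unset Printing Implicit Defensive.
Import Order.TTheory GRing.Theory Num.Theory.
Local Open Scope ring_scope.

Definition simple_graph (V : finType) (E : {set {set V}}) : Prop :=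
  forall e, e \in E -> #|e| = 2%N.

Definition vertex_cover (V : finType) (E : {set {set V}}) (P : {set V}) : bool :=
  [forall e in E, e :&: P != set0].

Definition E1 (V : finType) (E : {set {set V}}) (P : {set V}) : {set {set V}} :=
  [set e in E | #|e :&: P| == 1%N].
Definition E2 (V : finType) (E : {set {set V}}) (P : {set V}) : {set {set V}} :=
  [set e in E | e \subset P].

Definition fVCP (R : numDomainType) (V : finType) (E : {set {set V}})
  (c : V -> R) (q1 q2 : {set V} -> R) (P : {set V}) : R :=
  \sum_(i in P) c i + \sum_(e in E1 E P) q1 e + \sum_(e in E2 E P) q2 e.

Definition cprime (R : numDomainType) (V : finType) (E : {set {set V}})
  (c : V -> R) (q1 q2 : {set V} -> R) (i : V) : R :=
  c i + \sum_(e in E | i \in e) (q2 e - q1 e).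

Definition phi (R : numDomainType) (V : finType) (w : V -> R) (P : {set V}) : R :=
  \sum_(i in P) w i.

Definition is_opt_value (R : numDomainType) (V : finType)
  (feas : {set V} -> bool) (obj : {set V} -> R) (opt : R) : Prop :=
  (exists2 Q, feas Q & obj Q = opt) /\ (forall Q, feas Q -> opt <= obj Q).

Definition approx (R : numDomainType) (V : finType)
  (feas : {set V} -> bool) (obj : {set V} -> R) (eps : R) (P : {set V}) : Prop :=
  feas P /\ (forall opt, is_opt_value feas obj opt -> obj P <= eps * opt).

From mathcomp Require Import all_boot all_order all_algebra.
From mathcomp Require Import ring.
Set Implicit Arguments. Unset Strict Implicit. Unset Printing Implicit Defensive.
Import Order.TTheory GRing.Theory Num.Theory.
Local Open Scope ring_scope.

(* On vertex covers the VCPNEW objective is the MWVCP-EQV objective plus the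
   constant [S = sum_e S_e] with [S_e = 2 q1_e - q2_e]: an edge with one
   endpoint in P contributes [q1_e = (q2_e - q1_e) + S_e] and an edge inside
   P contributes [q2_e = 2 (q2_e - q1_e) + S_e].  Shifting a minimization
   objective by a constant [S >= 0] keeps the optimal solutions, and turns the
   guarantee [phi P* <= eps OPT] into
   [f P* <= eps OPT + S = (eps OPT + S) / (OPT + S) * (OPT + S)],
   which is the ratio [(eps + delta) / (1 + delta)] with [delta = S / OPT]. *)

Lemma card_setI_edge (V : finType) (e P : {set V}) :
  #|e| = 2%N -> e :&: P != set0 -> #|e :&: P| = (e \subset P).+1.
Proof.
move=> card_e meet_eP.
have := subset_leqif_card (subsetIl e P).
rewrite subsetI subxx card_e => -[le_eP2 eq_eP2].
case: (e \subset P) eq_eP2 => [/eqP -> // | /negbT ne_eP2].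
have : (0 < #|e :&: P|)%N by rewrite card_gt0.
by move: le_eP2 ne_eP2; case: #|_| => [|[|[|n]]].
Qed.

Lemma sum_incident (V : finType) (M : nmodType) (E : {set {set V}})
    (P : {set V}) (f : {set V} -> M) :
  \sum_(i in P) \sum_(e in E | i \in e) f e = \sum_(e in E) f e *+ #|e :&: P|.
Proof.
under eq_bigr => i _ do rewrite big_mkcondr /=.
rewrite exchange_big /=; apply: eq_bigr => e _.
rewrite -big_mkcondr /= -sumr_const; apply: eq_bigl => i.
by rewrite in_setI andbC.
Qed.

Lemma fVCP_cprime (R : numDomainType) (V : finType) (E : {set {set V}})
    (c : V -> R) (q1 q2 : {set V} -> R) (P : {set V}) :
  simple_graph E -> vertex_cover E P ->
  fVCP E c q1 q2 P = phi (cprime E c q1 q2) P + \sum_(e in E) (2 * q1 e - q2 e).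
Proof.
move=> graphE /forall_inP coverP.
rewrite /fVCP /phi /cprime big_split /= sum_incident -!addrA; congr (_ + _).
rewrite /E1 /E2 !big_set /= !big_mkcondr -!big_split /=.
apply: eq_bigr => e eE.
rewrite card_setI_edge ?graphE ?coverP //.
by case: (e \subset P) => /=; ring.
Qed.

Section ShiftedObjective.

Variables (R : realFieldType) (V : finType) (feas : {set V} -> bool).

Lemma is_opt_value_unique (obj : {set V} -> R) (o1 o2 : R) :
  is_opt_value feas obj o1 -> is_opt_value feas obj o2 -> o1 = o2.
Proof.
move=> [[Q1 feas1 <-] min1] [[Q2 feas2 <-] min2].
by apply: le_anti; rewrite min1 ?min2.
Qed.

Variables (obj obj' : {set V} -> R) (s : R).
Hypothesis obj'E : forall Q, feas Q -> obj' Q = obj Q + s.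

Lemma is_opt_value_shift (opt : R) :
  is_opt_value feas obj opt -> is_opt_value feas obj' (opt + s).
Proof.
move=> [[Q feasQ <-] minQ]; split; first by exists Q; rewrite ?obj'E.
by move=> Q' feasQ'; rewrite obj'E // lerD2r minQ.
Qed.

Lemma approx_shift (opt eps : R) (P : {set V}) :
  is_opt_value feas obj opt -> 0 < opt -> 0 <= s ->
  approx feas obj eps P ->
  approx feas obj' ((eps + s / opt) / (1 + s / opt)) P.
Proof.
move=> opt_obj opt_gt0 s_ge0 [feasP approxP].
split=> // opt' /(is_opt_value_unique (is_opt_value_shift opt_obj)) <-.
have ratioE : (eps + s / opt) / (1 + s / opt) * (opt + s) = eps * opt + s.
  have opt_neq0 : opt != 0 by rewrite gt_eqF.
  have opts_neq0 : opt + s != 0 by rewrite gt_eqF // ltr_wpDr.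
  by field; rewrite opt_neq0 opts_neq0.
by rewrite ratioE obj'E // lerD2r approxP.
Qed.

End ShiftedObjective.

Theorem lemma4 (R : realFieldType) (V : finType) (E : {set {set V}})
  (c : V -> R) (q1 q2 : {set V} -> R) (Po Pstar : {set V}) (eps : R) :
  simple_graph E ->
  (* Po is an optimal vertex cover for MWVCP-EQV with phi(Po) > 0 *)
  vertex_cover E Po ->
  (forall Q, vertex_cover E Q ->
     phi (cprime E c q1 q2) Po <= phi (cprime E c q1 q2) Q) ->
  0 < phi (cprime E c q1 q2) Po ->
  0 <= \sum_(e in E) (2 * q1 e - q2 e) ->
  (forall i, 0 <= cprime E c q1 q2 i) ->
  approx (vertex_cover E) (phi (cprime E c q1 q2)) eps Pstar ->
  let delta := (\sum_(e in E) (2 * q1 e - q2 e)) / phi (cprime E c q1 q2) Po in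
  approx (vertex_cover E) (fVCP E c q1 q2) ((eps + delta) / (1 + delta)) Pstar.
Proof.
move=> graphE coverPo minPo phiPo_gt0 S_ge0 _ approxPstar delta.
apply: (approx_shift (obj := phi (cprime E c q1 q2))) => //.
- by move=> Q; exact: fVCP_cprime.
- by split=> //; exists Po.
Qed.
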